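(* Let $G$ be a finite abelian group and let $k \in \mathbb{N}$. Let $B$ be a zero-sum sequence over $G$ such that $\max\mathsf{L}(B)=k$ and $|B|=\mathsf{D}_k(G)$. Then there exist some $g \in G$ with $\mathrm{ord}(g)=\exp(G)$ and some factorization $\zeta_g$ of $B$ with $|\zeta_g|=k$ in which the minimal zero-sum sequence $g^{\mathrm{ord}(g)}$ (the element $g$ repeated $\mathrm{ord}(g)$ times) occurs as a factor at least \[\left\lfloor\frac{k - (\eta(G) - \mathsf{D}(G^-))}{\exp(G)|\mathcal{A}(G)|}\right\rfloor\] times.
   Context: $G$ is written additively. A sequence over $G$ is a finite unordered list of elements with repetitions. A zero-sum sequence has terms summing to $0$; a minimal zero-sum sequence is a non-empty zero-sum sequence with no proper non-empty zero-sum subsequence; $\mathcal{A}(G)$ is the set of these. A factorization of a zero-sum sequence $B$ is a formal unordered product of minimal zero-sum sequences whose product is $B$; $|\zeta|$ is its number of factors; $\mathsf{L}(B)$ is the set of lengths of factorizations of $B$. $\mathsf{D}_k(G)$ is the smallest $\ell$ such that every sequence of length at least $\ell$ has $k$ disjoint non-empty zero-sum subsequences; $\mathsf{D}(H)=\mathsf{D}_1(H)$. $\eta(G)$ is the smallest $\ell$ such that every sequence over $G$ of length at least $\ell$ has a non-empty zero-sum subsequence of length at most $\exp(G)$. $G^-$ denotes an abelian group with $G\cong G^-\oplus C_{\exp(G)}$. *)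

From HB Require Import structures.
From mathcomp Require Import all_boot all_order all_algebra all_fingroup all_solvable.
Set Implicit Arguments. Unset Strict Implicit. Unset Printing Implicit Defensive.
Import GRing.Theory.
Local Open Scope ring_scope.

(* A finite abelian group G, written additively, is a finZmodType.  It is also
   viewed as a finGroupType (via FinRing.Zmodule_to_finGroup) to use the
   library notions of element order #[g], exponent, subgroups and direct
   products. *)
Notation gr G := (FinRing.Zmodule_to_finGroup G).

Section Seqs.
Variable G : finZmodType.

(* Sequences over G are modelled by lists, considered up to permutation. *)
Definition zero_sum (s : seq G) : bool := \sum_(x <- s) x == 0.

Definition subseqM (t s : seq G) : Prop := exists u, perm_eq s (t ++ u).

(* minimal zero-sum sequence: non-empty zero-sum, no proper non-empty
   zero-sum subsequence; sub-sequences are selected by a bit mask m, the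
   subsequence being proper iff the complementary selection is non-empty *)
Definition minimal_zs (s : seq G) : bool :=
  [&& s != [::], zero_sum s &
      [forall m : (size s).-tuple bool,
        (mask m s != [::]) && (mask (map negb m) s != [::]) ==>
        ~~ zero_sum (mask m s)]].

Definition factorization (B : seq G) (z : seq (seq G)) : Prop :=
  (forall A, A \in z -> minimal_zs A) /\ perm_eq B (flatten z).

Definition maxL_eq (B : seq G) (k : nat) : Prop :=
  (exists z, factorization B z /\ size z = k) /\
  (forall z, factorization B z -> size z <= k)%N.

Definition has_k_disjoint (k : nat) (s : seq G) : Prop :=
  exists ts : seq (seq G), [/\ size ts = k,
    (forall t, t \in ts -> t != [::] /\ zero_sum t) &
    subseqM (flatten ts) s].

Definition Dk_prop (K : {set G}) (k l : nat) : Prop :=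
  forall s : seq G, all (mem K) s -> (l <= size s)%N -> has_k_disjoint k s.

Definition is_Dk (K : {set G}) (k n : nat) : Prop :=
  Dk_prop K k n /\ forall l, Dk_prop K k l -> (n <= l)%N.

Definition exponentG : nat := exponent [set: gr G].
Definition ordG (g : G) : nat := #[g : gr G]%g.

Definition eta_prop (l : nat) : Prop :=
  forall s : seq G, (l <= size s)%N ->
    exists t, [/\ subseqM t s, t != [::], zero_sum t & (size t <= exponentG)%N].

Definition is_eta (n : nat) : Prop :=
  eta_prop n /\ forall l, eta_prop l -> (n <= l)%N.

(* |A(G)|: minimal zero-sum sequences counted as multisets, i.e. by their
   multiplicity functions.  Every multiplicity of an element g in a minimal
   zero-sum sequence is at most ord(g) <= |G|, so multiplicity functions with
   values in 'I_(#|G|.+1) represent every element of A(G) exactly once. *)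
Definition seq_of_mult (f : {ffun G -> 'I_(#|G|.+1)}) : seq G :=
  flatten [seq nseq (f x) x | x <- enum G].

Definition cardA : nat :=
  #|[set f : {ffun G -> 'I_(#|G|.+1)} | minimal_zs (seq_of_mult f)]|.

End Seqs.

From HB Require Import structures.
From mathcomp Require Import all_boot all_order all_algebra all_fingroup all_solvable.
From mathcomp Require Import zify.
From Stdlib Require Import Classical.
Import GRing.Theory.
Set Implicit Arguments. Unset Strict Implicit. Unset Printing Implicit Defensive.

(* Let z be a factorization of B of maximal length k, and call an atom long when
   its length is at least exp(G).  Peeling off zero-sum subsequences of length
   at most exp(G), which exist by the definition of eta(G), gives
   |B| < k exp(G) + eta(G) - #(short atoms of z).  Conversely a zero-sum free
   sequence over G^- of length D(G^-) - 1, padded with k exp(G) - 1 copies of a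
   generator g0 of the cyclic factor, has no k disjoint zero-sum subsequences,
   since each of them needs exp(G) copies of g0; so |B| = D_k(G) is at least
   k exp(G) + D(G^-) - 1.  Hence z has at least k - (eta(G) - D(G^-)) long
   atoms, and by pigeonhole over A(G) some long atom A0 occurs exp(G) q times,
   q being the floor of the statement.  Replacing these copies by q copies of
   the factorization of A0^exp(G) into the atoms x^ord(x), x in A0, does not
   lengthen z only if every element of A0 has order exp(G); the factorization
   obtained then has length k and contains q copies of g^ord(g). *)

Lemma perm_mask_cat (T : eqType) (m : bitseq) (s : seq T) :
  size m = size s -> perm_eq s (mask m s ++ mask (map negb m) s).
Proof.
move=> size_m; apply/seq.permP => P; rewrite count_cat.
by elim: s m size_m => [|x s IH] [|[] m] //= [/IH ->]; lia.
Qed.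

Lemma count_flatten_nseq (T : Type) (P : pred T) n (s : seq T) :
  count P (flatten (nseq n s)) = n * count P s.
Proof. by rewrite count_flatten map_nseq sumn_nseq mulnC. Qed.

Lemma flatten_nseqM (T : Type) n m (s : seq T) :
  flatten (nseq (n * m) s) = flatten (nseq n (flatten (nseq m s))).
Proof. by elim: n => //= n IH; rewrite mulSn nseqD flatten_cat IH. Qed.

Lemma perm_flatten_copies (T : eqType) (ss : seq (seq T)) (s : seq T) :
  {in ss, forall t, perm_eq t s} -> perm_eq (flatten ss) (flatten (nseq (size ss) s)).
Proof.
elim: ss => //= t ss IH ss_s; apply: perm_cat; first exact/ss_s/mem_head.
by apply: IH => u u_ss; apply: ss_s; rewrite inE u_ss orbT.
Qed.

Lemma sumn_map_le (T : eqType) (f : T -> nat) s M :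
  {in s, forall x, f x <= M} -> sumn (map f s) <= size s * M.
Proof.
elim: s => //= x s IH le_fM; rewrite mulSn leq_add ?le_fM ?mem_head //.
by apply: IH => y ys; apply: le_fM; rewrite inE ys orbT.
Qed.

Lemma sumn_map_ge (T : eqType) (f : T -> nat) s M :
  {in s, forall x, M <= f x} -> size s * M <= sumn (map f s).
Proof.
elim: s => //= x s IH le_Mf; rewrite mulSn leq_add ?le_Mf ?mem_head //.
by apply: IH => y ys; apply: le_Mf; rewrite inE ys orbT.
Qed.

Lemma sumn_map_eq1 (T : eqType) (f : T -> nat) s :
  {in s, forall x, 0 < f x} -> sumn (map f s) <= size s -> {in s, forall x, f x = 1}.
Proof.
elim: s => //= x s IH f_gt0 le_s y.
have f_s : {in s, forall y, 0 < f y} by move=> w ws; apply: f_gt0; rewrite inE ws orbT.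
have := sumn_map_ge f_s; have := f_gt0 x (mem_head x s); rewrite muln1 => fx ge_s.
by case/predU1P=> [->|ys]; [lia | apply: IH ys => //; lia].
Qed.

Lemma pigeonhole_count (T : eqType) (s : seq T) M :
  size (undup s) * M < size s -> exists2 x, x \in s & M < count_mem x s.
Proof.
move=> lt_s; have /hasP[x] : has (fun x => M < count_mem x s) (undup s).
  apply/negPn/negP => /hasPn le_M; move: lt_s; apply/negP; rewrite -leqNgt.
  have := perm_size (perm_count_undup s); rewrite size_flatten /shape -map_comp.
  rewrite (eq_map (fun x => size_nseq (count_mem x s) x)) => <-.
  by apply: sumn_map_le => x; rewrite leqNgt; apply: le_M.
by rewrite mem_undup; exists x.
Qed.

Section ZeroSumSequences.
Variable G : finZmodType.
Implicit Types (s t u B C : seq G) (z w : seq (seq G)).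

Lemma zero_sum_perm s t : perm_eq s t -> zero_sum s = zero_sum t.
Proof. by move=> eq_st; rewrite /zero_sum (perm_big _ eq_st). Qed.

Lemma zero_sum_cat s t : zero_sum s -> zero_sum (s ++ t) = zero_sum t.
Proof. by rewrite /zero_sum big_cat /= => /eqP ->; rewrite add0r. Qed.

Lemma zero_sum_flatten z : all (@zero_sum G) z -> zero_sum (flatten z).
Proof.
elim: z => [|s z IH] /=; first by rewrite /zero_sum big_nil.
by case/andP=> zs_s /IH; rewrite zero_sum_cat.
Qed.

Lemma subseqM_countP t s :
  subseqM t s <-> forall x, count_mem x t <= count_mem x s.
Proof.
split=> [[u perm_s] x|/count_subseqP[t' sub_t' perm_t]].
  by rewrite (seq.permP perm_s) count_cat leq_addr.
have [u perm_s] := perm_to_subseq sub_t'.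
by exists u; rewrite (permPl perm_s) perm_cat2r perm_sym.
Qed.

Lemma has_disjoint1 t s :
  subseqM t s -> t != [::] -> zero_sum t -> has_k_disjoint 1 s.
Proof.
move=> [u perm_s] t0 zs_t; exists [:: t]; split=> //=; last by rewrite cats0; exists u.
by move=> t'; rewrite inE => /eqP ->.
Qed.

Lemma minimal_zsP s :
  minimal_zs s <->
  [/\ s != [::], zero_sum s &
      forall t u, perm_eq s (t ++ u) -> t != [::] -> u != [::] -> ~~ zero_sum t].
Proof.
split=> [/and3P[s0 zs_s /forallP min_s]|[s0 zs_s min_s]]; last first.
  rewrite /minimal_zs s0 zs_s; apply/forallP=> m; apply/implyP=> /andP[].
  by apply: min_s; apply: perm_mask_cat; rewrite size_tuple.
split=> // t u perm_s t0 u0.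
have /count_maskP[m size_m perm_t] : forall x, count_mem x t <= count_mem x s.
  by apply/subseqM_countP; exists u.
have perm_s' := perm_mask_cat size_m.
have perm_u : perm_eq u (mask (map negb m) s).
  by rewrite -(perm_cat2l t) -(permPl perm_s) (permPl perm_s') perm_cat2r perm_sym.
have := min_s (Tuple (introT eqP size_m)); rewrite /= -(zero_sum_perm perm_t).
rewrite -!size_eq0 -(perm_size perm_t) -(perm_size perm_u) !size_eq0 t0 u0.
exact.
Qed.

Lemma minimal_zs_perm s t : perm_eq s t -> minimal_zs s -> minimal_zs t.
Proof.
move=> perm_st /minimal_zsP[s0 zs_s min_s]; apply/minimal_zsP; split.
- by rewrite -size_eq0 -(perm_size perm_st) size_eq0.
- by rewrite -(zero_sum_perm perm_st).
- by move=> t' u; rewrite -(permPl perm_st); apply: min_s.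
Qed.

Lemma factorization_cat B C z w :
  factorization B z -> factorization C w -> factorization (B ++ C) (z ++ w).
Proof.
move=> [atoms_z perm_B] [atoms_w perm_C]; split; last by rewrite flatten_cat perm_cat.
by move=> A; rewrite mem_cat => /orP[/atoms_z|/atoms_w].
Qed.

Lemma factorization_perm B C z : perm_eq B C -> factorization C z -> factorization B z.
Proof. by move=> perm_BC [atoms_z perm_C]; split=> //; rewrite (permPl perm_BC). Qed.

Lemma factorization_nseq n B z :
  factorization B z -> factorization (flatten (nseq n B)) (flatten (nseq n z)).
Proof.
move=> fact_B; elim: n => [|n IH] /=; first by split.
exact: factorization_cat.
Qed.

Definition maxL_le B j : Prop := forall z, factorization B z -> size z <= j.

Lemma size_factorization_gt0 B z : factorization B z -> B != [::] -> 0 < size z.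
Proof. by case: z => // [[_ /perm_size]]; rewrite -size_eq0 => ->. Qed.

Lemma factorization_exists B : zero_sum B -> exists z, factorization B z.
Proof.
have [n] := ubnP (size B); elim: n B => // n IH B /ltnSE le_Bn zs_B.
have [->|B0] := eqVneq B [::]; first by exists [::].
case min_B: (minimal_zs B).
  exists [:: B]; split=> [A|]; last by rewrite /= cats0.
  by rewrite inE => /eqP ->.
move: min_B; rewrite /minimal_zs B0 zs_B /= => /negbT/forallPn[[m /= /eqP size_m]].
rewrite negb_imply negbK => /andP[/andP[nz_m nz_m'] zs_m].
have perm_B := perm_mask_cat size_m.
have zs_m' : zero_sum (mask (map negb m) B).
  by rewrite -(zero_sum_cat _ zs_m) -(zero_sum_perm perm_B).
have size_B : size B = size (mask m B) + size (mask (map negb m) B).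
  by rewrite (perm_size perm_B) size_cat.
have {nz_m}m_gt0 : 0 < size (mask m B) by rewrite lt0n size_eq0.
have {nz_m'}m'_gt0 : 0 < size (mask (map negb m) B) by rewrite lt0n size_eq0.
have [z1 fact1] := IH (mask m B) ltac:(lia) zs_m.
have [z2 fact2] := IH (mask (map negb m) B) ltac:(lia) zs_m'.
by exists (z1 ++ z2); apply: factorization_perm perm_B (factorization_cat fact1 fact2).
Qed.

End ZeroSumSequences.

Section Atoms.
Variable G : finZmodType.
Implicit Types (A : seq G) (z : seq (seq G)) (x : G).
Local Notation e := (exponentG G).

Lemma exponentG_gt0 : 0 < e.
Proof. exact: exponent_gt0. Qed.

Lemma ordG_gt0 x : 0 < ordG x.
Proof. exact: order_gt0. Qed.

Lemma ordG_dvd_exponent x : ordG x %| e.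
Proof. by apply: dvdn_exponent; rewrite inE. Qed.

Lemma ordG_le_exponent x : ordG x <= e.
Proof. exact: dvdn_leq exponentG_gt0 (ordG_dvd_exponent x). Qed.

Lemma ordG_le_card x : ordG x <= #|G|.
Proof.
have := @order_dvdG _ [set: gr G] x; rewrite inE => /(_ isT) /dvdn_leq.
by rewrite cardsT; apply; apply/card_gt0P; exists x.
Qed.

Lemma mulrn_eq0_ordG x n : (x *+ n == 0)%R = (ordG x %| n).
Proof. by rewrite /ordG order_dvdn. Qed.

Lemma zero_sum_nseq x n : zero_sum (nseq n x) = (ordG x %| n).
Proof. by rewrite /zero_sum big_nseq iter_addr_0 mulrn_eq0_ordG. Qed.

Lemma minimal_zs_nseq_ordG x : minimal_zs (nseq (ordG x) x).
Proof.
apply/minimal_zsP; split; first by rewrite -size_eq0 size_nseq -lt0n ordG_gt0.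
  by rewrite zero_sum_nseq.
move=> t u perm_x t0 u0.
have /all_pred1P -> : all (pred1 x) t.
  apply/allP=> y y_t; have : y \in nseq (ordG x) x by rewrite (perm_mem perm_x) mem_cat y_t.
  by rewrite mem_nseq => /andP[].
rewrite zero_sum_nseq; apply/negP => /dvdn_leq.
have := perm_size perm_x; rewrite size_cat size_nseq.
by move: t0 u0; rewrite -!size_eq0; lia.
Qed.

Lemma count_mem_le_ordG A x : minimal_zs A -> count_mem x A <= ordG x.
Proof.
move=> min_A; rewrite leqNgt; apply/negP => lt_x.
have [u perm_A] : subseqM (nseq (ordG x) x) A.
  apply/subseqM_countP => y; rewrite count_nseq /=.
  by case: (eqVneq x y) => [<-|_]; rewrite ?mul1n ?mul0n // ltnW.
have := perm_size perm_A; rewrite size_cat size_nseq => size_A.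
have u0 : u != [::] by rewrite -size_eq0; have := count_size (pred1 x) A; lia.
case/minimal_zsP: min_A => _ _ /(_ _ _ perm_A).
by rewrite zero_sum_nseq dvdnn u0 -size_eq0 size_nseq -lt0n ordG_gt0 => /(_ isT isT).
Qed.

Definition mult_key A : {ffun G -> 'I_(#|G|.+1)} := [ffun x => inord (count_mem x A)].

Lemma count_seq_of_mult (f : {ffun G -> 'I_(#|G|.+1)}) x :
  count_mem x (seq_of_mult f) = f x.
Proof.
rewrite /seq_of_mult count_flatten -map_comp.
rewrite (eq_map (g := fun y => (y == x) * f y)); last first.
  by move=> y /=; rewrite count_nseq /= eq_sym.
rewrite sumnE big_map big_enum /= (bigD1 x) //= eqxx mul1n big1 ?addn0 //.
by move=> y /negbTE ->.
Qed.

Lemma perm_seq_of_mult_key A : minimal_zs A -> perm_eq (seq_of_mult (mult_key A)) A.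
Proof.
move=> min_A; apply/allP=> x _ /=; rewrite count_seq_of_mult ffunE inordK // ltnS.
exact: leq_trans (count_mem_le_ordG x min_A) (ordG_le_card x).
Qed.

Lemma eq_mult_key A A' :
  minimal_zs A -> minimal_zs A' -> (mult_key A == mult_key A') = perm_eq A A'.
Proof.
move=> min_A min_A'; apply/eqP/idP => [eq_key|perm_A].
  by rewrite -(permPl (perm_seq_of_mult_key min_A)) eq_key perm_seq_of_mult_key.
by apply/ffunP=> x; rewrite !ffunE (seq.permP perm_A).
Qed.

Lemma exists_frequent_atom z M :
  {in z, forall A, minimal_zs A} -> cardA G * M < size z ->
  exists2 A0, A0 \in z & M < count (fun A => perm_eq A A0) z.
Proof.
move=> atoms_z lt_z.
have [f f_z lt_f] : exists2 f, f \in map mult_key z & M < count_mem f (map mult_key z).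
  apply: pigeonhole_count; rewrite size_map; apply: leq_ltn_trans lt_z; rewrite leq_mul2r.
  apply/orP; right; have/card_uniqP <- := undup_uniq (map mult_key z).
  apply/subset_leq_card/subsetP => key; rewrite mem_undup => /mapP[A A_z ->].
  rewrite inE; apply: minimal_zs_perm (atoms_z A A_z).
  by rewrite perm_sym perm_seq_of_mult_key ?atoms_z.
case/mapP: f_z lt_f => A0 A0_z ->; rewrite count_map => lt_A0.
exists A0 => //; rewrite -(eq_in_count (a1 := preim mult_key (pred1 (mult_key A0)))) //.
by move=> A A_z /=; rewrite eq_mult_key ?atoms_z.
Qed.

Lemma exists_frequent_long_atom z M :
  {in z, forall A, minimal_zs A} -> 0 < M ->
  cardA G * M.-1 < count (fun A => e <= size A) z ->
  exists2 A0, e <= size A0 & M <= count (fun A => perm_eq A A0) z.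
Proof.
move=> atoms_z M_gt0; rewrite -size_filter => /exists_frequent_atom[A|A0].
  by rewrite mem_filter => /andP[_ /atoms_z].
rewrite mem_filter => /andP[le_eA0 _] freq_A0; exists A0 => //.
rewrite -(prednK M_gt0); apply: leq_trans freq_A0 _.
exact: leq_count_subseq (filter_subseq _ _).
Qed.

End Atoms.

Section Exchange.
Variable G : finZmodType.
Implicit Types (A B : seq G) (z : seq (seq G)) (x : G).
Local Notation e := (exponentG G).

(* (x^ord(x))^(exp(G) / ord(x)) = x^exp(G), so these atoms factor A^exp(G). *)
Definition exp_factorization A : seq (seq G) :=
  flatten [seq nseq (e %/ ordG x) (nseq (ordG x) x) | x <- A].

Lemma exp_factorizationP A : factorization (flatten (nseq e A)) (exp_factorization A).
Proof.
split=> [C /flattenP[_ /mapP[x _ ->]]|].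
  by rewrite mem_nseq => /andP[_ /eqP ->]; apply: minimal_zs_nseq_ordG.
apply/seq.permP => P; rewrite count_flatten_nseq.
elim: A => [|x A IH] /=; first by rewrite muln0.
rewrite /exp_factorization /= flatten_cat count_cat -/(exp_factorization A) -IH.
by rewrite count_flatten_nseq count_nseq mulnCA divnK ?ordG_dvd_exponent // mulnDr mulnC.
Qed.

Lemma size_exp_factorization A :
  size (exp_factorization A) = sumn [seq e %/ ordG x | x <- A].
Proof.
elim: A => // x A IH.
by rewrite /exp_factorization /= size_cat size_nseq -/(exp_factorization A) IH.
Qed.

Lemma exponent_div_ordG_gt0 x : 0 < e %/ ordG x.
Proof. by rewrite divn_gt0 ?ordG_gt0 ?ordG_le_exponent. Qed.

Lemma mem_exp_factorization x A : x \in A -> nseq (ordG x) x \in exp_factorization A.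
Proof.
move=> x_A; apply/flattenP; exists (nseq (e %/ ordG x) (nseq (ordG x) x)).
  by apply/mapP; exists x.
by rewrite mem_nseq exponent_div_ordG_gt0 /=.
Qed.

Lemma factorization_exchange B z A0 q :
  factorization B z -> e * q <= count (fun A => perm_eq A A0) z ->
  exists r, factorization B (flatten (nseq q (exp_factorization A0)) ++ r) /\
            size r + e * q = size z.
Proof.
move=> [atoms_z perm_B] le_eq; set P := (fun A => perm_eq A A0) in le_eq.
set F := filter P z; set r := drop (e * q) F ++ filter (predC P) z.
exists r; split; last by rewrite size_cat size_drop !size_filter -(count_predC P z); lia.
have perm_z : perm_eq z (take (e * q) F ++ r).
  by rewrite catA cat_take_drop perm_sym perm_filterC.
have perm_take : perm_eq (flatten (take (e * q) F)) (flatten (nseq (e * q) A0)).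
  have := perm_flatten_copies (ss := take (e * q) F) (s := A0).
  rewrite size_takel ?size_filter //; apply=> A /mem_take.
  by rewrite mem_filter => /andP[].
have fact_r : factorization (flatten r) r.
  split=> // A; rewrite mem_cat => /orP[/mem_drop|]; rewrite mem_filter => /andP[_ /atoms_z] //.
apply: factorization_perm (factorization_cat (factorization_nseq q (exp_factorizationP A0)) fact_r).
rewrite (permPl perm_B) (permPl (perm_flatten perm_z)) flatten_cat perm_cat2r.
by rewrite (permPl perm_take) mulnC flatten_nseqM.
Qed.

Lemma size_exp_factorization_ge A : size A <= size (exp_factorization A).
Proof.
rewrite size_exp_factorization -[size A]muln1.
by apply: sumn_map_ge => x _; apply: exponent_div_ordG_gt0.
Qed.

Lemma ordG_exp_factorization_short A :
  size (exp_factorization A) <= size A -> {in A, forall x, ordG x = e}.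
Proof.
rewrite size_exp_factorization => le_sum x x_A.
have div_gt0 : {in A, forall x, 0 < e %/ ordG x} by move=> y _; apply: exponent_div_ordG_gt0.
rewrite -[RHS](divnK (ordG_dvd_exponent x)).
by rewrite (sumn_map_eq1 div_gt0 le_sum x_A) mul1n.
Qed.

Lemma exchange_long_atom B z A0 q :
  factorization B z -> maxL_le B (size z) -> e <= size A0 -> 0 < q ->
  e * q <= count (fun A => perm_eq A A0) z ->
  exists g, exists z2, [/\ ordG g = e, factorization B z2, size z2 = size z &
    q <= count (fun A => perm_eq A (nseq (ordG g) g)) z2].
Proof.
move=> fact_z max_z le_eA0 q_gt0 le_eq.
(* By maximality the exchange cannot lengthen z, so A0^exp(G) splits into at
   most exp(G) <= |A0| atoms x^ord(x): all elements of A0 have order exp(G). *)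
have [r [fact_r size_r]] := factorization_exchange fact_z le_eq.
have size_new : size (flatten (nseq q (exp_factorization A0)) ++ r) =
                q * size (exp_factorization A0) + size r.
  by rewrite size_cat -!count_predT count_flatten_nseq.
have size_ex : size (exp_factorization A0) = e.
  have := max_z _ fact_r; rewrite size_new -size_r addnC leq_add2l mulnC leq_pmul2r //.
  move=> le_ex; apply/eqP; rewrite eqn_leq le_ex.
  exact: leq_trans le_eA0 (size_exp_factorization_ge A0).
have /hasP[g g_A0 _] : has predT A0.
  by rewrite has_predT (leq_trans (exponentG_gt0 G) le_eA0).
exists g, (flatten (nseq q (exp_factorization A0)) ++ r); split=> //.
- by apply: ordG_exp_factorization_short g_A0; rewrite size_ex.
- by rewrite size_new size_ex -size_r addnC mulnC.
- rewrite count_cat count_flatten_nseq; apply: leq_trans (leq_addr _ _).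
  rewrite -{1}(muln1 q) leq_pmul2l // -has_count; apply/hasP.
  by exists (nseq (ordG g) g); [apply: mem_exp_factorization | rewrite /= perm_refl].
Qed.

End Exchange.

Section EtaBound.
Variables (G : finZmodType) (eta : nat).
Hypothesis eta_eta : eta_prop G eta.
Implicit Types (B C : seq G) (z : seq (seq G)).
Local Notation e := (exponentG G).

(* Peel off a zero-sum subsequence of length at most exp(G) and recurse on the
   rest, whose factorizations are one atom shorter. *)
Lemma size_lt_eta_maxL C j : zero_sum C -> maxL_le C j -> size C < j * e + eta.
Proof.
have [n] := ubnP (size C); elim: n C j => // n IH C j /ltnSE le_Cn zs_C max_C.
have [lt_C|le_C] := ltnP (size C) eta; first exact: leq_trans lt_C (leq_addl _ _).
have [t [[u perm_C] t0 zs_t le_te]] := eta_eta le_C.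
have zs_u : zero_sum u by rewrite -(zero_sum_cat u zs_t) -(zero_sum_perm perm_C).
have [ft fact_t] := factorization_exists zs_t.
have ft_gt0 := size_factorization_gt0 fact_t t0.
have fact_C f : factorization u f -> factorization C (ft ++ f).
  by move=> fact_u; apply: factorization_perm perm_C (factorization_cat fact_t fact_u).
have size_C : size C = size t + size u by rewrite (perm_size perm_C) size_cat.
have {t0}t_gt0 : 0 < size t by rewrite lt0n size_eq0.
case: j max_C => [|j] max_C.
  have [fu /fact_C/max_C] := factorization_exists zs_u.
  by rewrite size_cat; lia.
have lt_u : size u < j * e + eta.
  apply: IH zs_u _; first lia.
  by move=> f /fact_C/max_C; rewrite size_cat; lia.
by rewrite size_C mulSn; lia.
Qed.

Lemma size_add_count_short_lt B z :
  factorization B z -> maxL_le B (size z) ->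
  size B + count (fun A => size A < e) z < size z * e + eta.
Proof.
move=> [atoms_z perm_B] max_z; set short := (fun A : seq G => size A < e).
set S := filter short z; set L := filter (predC short) z.
have perm_z : perm_eq (S ++ L) z by rewrite perm_filterC.
have perm_B' : perm_eq B (flatten S ++ flatten L).
  by rewrite -flatten_cat (permPl perm_B) perm_flatten // perm_sym.
have size_z : size S + size L = size z by rewrite -size_cat (perm_size perm_z).
have fact_S : factorization (flatten S) S.
  by split=> // A; rewrite mem_filter => /andP[_ /atoms_z].
have lt_L : size (flatten L) < size L * e + eta.
  apply: size_lt_eta_maxL => [|f fact_f].
    apply/zero_sum_flatten/allP => A; rewrite mem_filter => /andP[_ /atoms_z].
    by case/and3P.
  have := max_z _ (factorization_perm perm_B' (factorization_cat fact_S fact_f)).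
  by rewrite size_cat -size_z leq_add2l.
have le_S : size (flatten S) <= size S * e.-1.
  rewrite size_flatten; apply: sumn_map_le => A; rewrite mem_filter => /andP[lt_A _].
  by rewrite -ltnS prednK ?exponentG_gt0.
have eS : size S * e = size S * e.-1 + size S by rewrite -mulnSr prednK ?exponentG_gt0.
have size_B : size B = size (flatten S) + size (flatten L).
  by rewrite (perm_size perm_B') size_cat.
rewrite size_B -size_filter -/S -size_z mulnDl eS.
move: le_S lt_L; set a := size S * e.-1; set b := size L * e; lia.
Qed.

End EtaBound.

Section DavenportConstants.
Variable G : finZmodType.
Implicit Types (T : seq G) (X : {set G}).

Lemma is_Dk_gt0 X k n : 0 < k -> is_Dk X k n -> 0 < n.
Proof.
move=> k_gt0 [Dk_n _]; rewrite lt0n; apply/eqP => n0; rewrite n0 in Dk_n.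
have [[|t ts] [/= size_ts ts_zs [u]]] := Dk_n [::] isT (leqnn 0); first by lia.
have [t0 _] := ts_zs t (mem_head t ts).
by case: t t0 {ts_zs} => // a t' _; rewrite perm_sym => /perm_nilP.
Qed.

Lemma is_Dk_witness X k n :
  is_Dk X k n -> 0 < n -> exists T, [/\ all (mem X) T, n.-1 <= size T & ~ has_k_disjoint k T].
Proof.
move=> [_ min_n] n_gt0; apply: NNPP => no_T.
have /min_n : Dk_prop X k n.-1.
  by move=> T T_X le_T; apply: NNPP => T_free; apply: no_T; exists T.
lia.
Qed.

Lemma is_Dk1_le_eta X n eta : is_Dk X 1 n -> eta_prop G eta -> n <= eta.
Proof.
move=> [_ min_n] eta_eta; apply: min_n => s _ le_s.
by have [t [sub_t t0 zs_t _]] := eta_eta s le_s; apply: has_disjoint1 sub_t t0 zs_t.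
Qed.

End DavenportConstants.

Section DkLowerBound.
Variables (G : finZmodType) (K : {group gr G}) (g0 : G).
Hypotheses (ord_g0 : ordG g0 = exponentG G) (dprod_K : (K \x <[g0 : gr G]>)%g = [set: gr G]).
Implicit Types (s t T : seq G).
Local Notation e := (exponentG G).

Lemma dprod_cycle_eq0 y : y \in K -> y \in <[g0 : gr G]>%g -> y = 0%R.
Proof.
case/dprodP: dprod_K => _ _ _ tiK y_K y_g0.
have : y \in (K :&: <[g0 : gr G]>)%g by rewrite inE y_K.
by rewrite tiK => /set1P.
Qed.

Lemma sum_mem_group s : all (mem K) s -> (\sum_(x <- s) x)%R \in K.
Proof.
elim: s => [|x s IH] /=; first by rewrite big_nil group1.
by case/andP=> x_K /IH s_K; rewrite big_cons; apply: (@groupM _ K x).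
Qed.

Lemma sum_count_split x t :
  (\sum_(y <- t) y = x *+ count_mem x t + \sum_(y <- t | y != x) y)%R.
Proof.
rewrite (bigID (pred1 x)) /=; congr (_ + _)%R.
by rewrite (eq_bigr (fun=> x)) => [|y /eqP //]; rewrite big_const_seq iter_addr_0.
Qed.

Lemma count_generator_ge T t m :
  all (mem K) T -> ~ has_k_disjoint 1 T -> subseqM t (T ++ nseq m g0) ->
  t != [::] -> zero_sum t -> e <= count_mem g0 t.
Proof.
move=> T_K T_free /subseqM_countP sub_t t0 zs_t.
have t_K y : y \in t -> y != g0 -> y \in K.
  move=> y_t ne_y; have : 0 < count_mem y (T ++ nseq m g0).
    by apply: leq_trans _ (sub_t y); rewrite -has_count; apply/hasP; exists y => /=.
  rewrite count_cat count_nseq /= eq_sym (negbTE ne_y) mul0n addn0 -has_count.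
  by case/hasP=> y' y'_T /eqP <-; apply: (allP T_K).
set S := (\sum_(y <- t | y != g0) y)%R.
have S_K : S \in K.
  rewrite /S -big_filter; apply: sum_mem_group; apply/allP => y.
  by rewrite mem_filter => /andP[ne_y y_t]; apply: t_K.
move: zs_t; rewrite /zero_sum (sum_count_split g0) -/S => /eqP sum0.
have S0 : S = 0%R.
  apply: dprod_cycle_eq0 S_K _; move/eqP: sum0; rewrite addrC addr_eq0 => /eqP ->.
  by rewrite (groupV _ ((g0 : gr G) ^+ count_mem g0 t)%g) mem_cycle.
move: sum0; rewrite S0 addr0 => /eqP; rewrite mulrn_eq0_ordG ord_g0.
have [c0|c_gt0] := posnP (count_mem g0 t); last by move=> /dvdn_leq; apply.
case: T_free; apply: has_disjoint1 t0 _;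
  last by rewrite /zero_sum (sum_count_split g0) -/S S0 c0 addr0.
apply/subseqM_countP => y; have [->|ne_y] := eqVneq y g0; first by rewrite c0.
by move: (sub_t y); rewrite count_cat count_nseq /= eq_sym (negbTE ne_y) mul0n addn0.
Qed.

Lemma Dk_lower_bound k n DGm :
  is_Dk (K : {set G}) 1 DGm -> Dk_prop [set: G] k n -> 0 < k -> k * e + DGm <= n.+1.
Proof.
move=> DK Dk_n k_gt0; have DGm_gt0 := is_Dk_gt0 (ltnSn 0) DK.
have [T [T_K le_T T_free]] := is_Dk_witness DK DGm_gt0.
rewrite leqNgt; apply/negP => lt_n.
set W := T ++ nseq (k * e).-1 g0.
have [ts [size_ts ts_zs /subseqM_countP sub_W]] : has_k_disjoint k W.
  by apply: Dk_n; [apply/allP => y; rewrite inE | rewrite size_cat size_nseq; lia].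
have g0_T : count_mem g0 T = 0.
  apply/count_memPn/negP => g0_T; apply: T_free; apply: (@has_disjoint1 _ [:: g0]) => //.
    by exists (rem g0 T); apply: perm_to_rem.
  suff -> : g0 = 0%R by rewrite /zero_sum big_seq1.
  by apply: dprod_cycle_eq0; [apply: (allP T_K) | apply: cycle_id].
have ge_ts : size ts * e <= count_mem g0 (flatten ts).
  rewrite count_flatten; apply: sumn_map_ge => t t_ts; have [t0 zs_t] := ts_zs t t_ts.
  apply: count_generator_ge T_K T_free _ t0 zs_t; apply/subseqM_countP => y.
  apply: leq_trans (sub_W y); move/perm_flatten/seq.permP: (perm_to_rem t_ts) => ->.
  by rewrite /= count_cat leq_addr.
have := sub_W g0; rewrite /W count_cat g0_T count_nseq /= eqxx mul1n.
have := exponentG_gt0 G; move: ge_ts; rewrite size_ts; set c := count _ _; set ke := k * e.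
lia.
Qed.

Lemma count_long_atoms_ge eta DGm (B : seq G) (z : seq (seq G)) :
  is_Dk (K : {set G}) 1 DGm -> eta_prop G eta ->
  factorization B z -> maxL_le B (size z) -> Dk_prop [set: G] (size z) (size B) ->
  size z + DGm <= count (fun A => e <= size A) z + eta.
Proof.
move=> DK eta_eta fact_z max_z Dk_B.
have count_z : count (fun A => e <= size A) z + count (fun A => size A < e) z = size z.
  rewrite addnC -(count_predC (fun A : seq G => size A < e)); congr (_ + _).
  by apply: eq_count => A /=; rewrite leqNgt.
have [z0|z_gt0] := posnP (size z).
  by rewrite z0 add0n (leq_trans (is_Dk1_le_eta DK eta_eta)) ?leq_addl.
have := Dk_lower_bound DK Dk_B z_gt0; have := size_add_count_short_lt eta_eta fact_z max_z.
move: count_z; set ke := size z * e; lia.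
Qed.

End DkLowerBound.

Lemma divz_nat_gt0 (n : int) (d : nat) :
  (0 < (n %/ Posz d)%Z)%R ->
  exists qn, [/\ (n %/ Posz d)%Z = Posz qn, 0 < qn, 0 < d & (Posz (qn * d) <= n)%R].
Proof.
move=> q_gt0; have d_gt0 : 0 < d.
  by rewrite lt0n; apply: contraTneq q_gt0 => ->; rewrite divz0.
exists `|(n %/ Posz d)%Z|%N; split=> //; first by rewrite gtz0_abs.
  by rewrite absz_gt0 Num.Theory.lt0r_neq0.
by rewrite PoszM gtz0_abs // lez_floor // eqz_nat -lt0n.
Qed.

Unset Implicit Arguments.

Theorem lemma6p4 (G : finZmodType) (k : nat) (B : seq G)
  (K : {group gr G}) (g0 : G) (eta DGm : nat) :
  ordG g0 = exponentG G ->
  (K \x <[g0 : gr G]> = [set: gr G])%g ->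
  is_Dk (K : {set G}) 1 DGm ->
  is_eta G eta ->
  zero_sum B ->
  maxL_eq B k ->
  is_Dk [set: G] k (size B) ->
  exists g : G, exists z : seq (seq G),
    [/\ ordG g = exponentG G, factorization B z, size z = k &
      (((k%:Z - (eta%:Z - DGm%:Z)) %/ ((exponentG G * cardA G)%:Z))%Z
         <= (count (fun A => perm_eq A (nseq (ordG g) g)) z)%:Z)%R].
Proof.
move=> ord_g0 dprod_K DK [eta_eta _] _ [[z [fact_z size_z]] max_B] [Dk_B _].
subst k; set q := (_ %/ _)%Z.
have [q_le0|/divz_nat_gt0[qn [qE qn_gt0 d_gt0 floor_q]]] := Num.Theory.lerP q 0.
  by exists g0, z; split=> //; apply: Order.POrderTheory.le_trans q_le0 _.
have cA_gt0 : 0 < cardA G by move: d_gt0; rewrite muln_gt0 => /andP[].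
have eqn_gt0 : 0 < exponentG G * qn by rewrite muln_gt0 exponentG_gt0.
have long_z := count_long_atoms_ge ord_g0 dprod_K DK eta_eta fact_z max_B Dk_B.
have many_long : cardA G * (exponentG G * qn).-1 < count (fun A => exponentG G <= size A) z.
  by rewrite -subn1 mulnBr muln1; move: floor_q long_z; lia.
have [A0 le_eA0 freq_A0] := exists_frequent_long_atom (proj1 fact_z) eqn_gt0 many_long.
have [g [z2 [ord_g fact_z2 size_z2 count_z2]]] :=
  exchange_long_atom fact_z max_B le_eA0 qn_gt0 freq_A0.
by exists g, z2; split=> //; rewrite /q qE lez_nat.
Qed.
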